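(* Let $n=2^s$, $q=2^r$ ($s,r$ positive integers). For $\beta\in\mathbb{F}_q$ let $n_\beta=|\{g\in SL(n,q):Tr(g)=\beta\}|$. Then \[ n_\beta=q^{\binom{n}{2}-1}\Big\{\prod_{j=2}^{n}(q^j-1)+1+q\,\theta(\beta)\Big\},\qquad \theta(\beta)=\begin{cases}K_{n-2}(\lambda;\beta^{-1}),&\beta\ne0,\\0,&\beta=0.\end{cases} \]
   Context: $Tr$ is the matrix trace. $\mathbb{F}_q$ is the field with $q$ elements, $tr$ the absolute trace to $\mathbb{F}_2$, $\lambda(x)=(-1)^{tr(x)}$. For $m\ge1$ and $a\in\mathbb{F}_q^*$, $K_m(\lambda;a)=\sum_{\alpha_1,\dots,\alpha_m\in\mathbb{F}_q^*}\lambda(\alpha_1+\cdots+\alpha_m+a\alpha_1^{-1}\cdots\alpha_m^{-1})$; by convention $K_0(\lambda;a)=\lambda(a)$. *)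

From HB Require Import structures.
From mathcomp Require Import all_boot all_order all_algebra all_field.
Set Implicit Arguments. Unset Strict Implicit. Unset Printing Implicit Defensive.
Import Order.TTheory GRing.Theory Num.Theory.
Local Open Scope ring_scope.

Definition abs_tr (F : finFieldType) (r : nat) (x : F) : F :=
  \sum_(i < r) x ^+ (2 ^ i).

Definition lam (F : finFieldType) (r : nat) (x : F) : int :=
  if abs_tr r x == 0 then 1 else -1.

Definition kloosterman (F : finFieldType) (r m : nat) (a : F) : int :=
  if m is 0 then lam r a else
  \sum_(al : {ffun 'I_m -> F} | [forall i, al i != 0])
     lam r (\sum_(i < m) al i + a * (\prod_(i < m) al i)^-1).

Definition theta (F : finFieldType) (r n : nat) (b : F) : int :=
  if b == 0 then 0 else kloosterman r (n - 2) b^-1.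

Definition n_beta (F : finFieldType) (n : nat) (b : F) : nat :=
  #|[set g : 'M[F]_n | (\det g == 1) && (\tr g == b)]|.

(* Write Z_n(d, a) for the sum of lam(a Tr g) over det g = d.  Detecting Tr g = b
   with an additive character gives q n_b = |SL| + sum_(a <> 0) lam(a b) Z_n(1, a).
   Splitting off the (1,1) entry x of g and passing to the Schur complement
   yields Z_(1+n)(d, a) = q^n sum_(x <> 0) lam(a x) Z_n(d / x, a), the terms with
   x = 0 cancelling under a shear.  Hence Z_n(d, a) = q^C(n,2) H_n(d, a),
   where H_n(d, a) sums lam(a (x_1 + ... + x_n)) over (x_i) in (F^x)^n with
   product d.  Rescaling the x_i by a moves a into the product constraint as
   a^n; since n is a power of 2 and lam is Frobenius-invariant, the sum over a
   becomes sum_(e <> 0) lam(b^n e) H_n(e, 1), which one more orthogonality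
   relation evaluates to q K_(n-2)(lam; b^-1) + 1 (and to 1 when b = 0). *)

From HB Require Import structures.
From mathcomp Require Import all_boot all_order all_algebra all_field.
From mathcomp Require Import ring.
Set Implicit Arguments. Unset Strict Implicit. Unset Printing Implicit Defensive.
Import GRing.Theory Num.Theory.
Local Open Scope ring_scope.

Lemma sum_eq0_sign_flip (R : numDomainType) (T : finType) (f : T -> R) (g : T -> T) :
  injective g -> (forall v, f (g v) = - f v) -> \sum_v f v = 0.
Proof.
move=> g_inj fgN; apply/eqP; suff : (\sum_v f v) *+ 2 == 0 by rewrite mulrn_eq0.
rewrite mulr2n {1}(reindex_inj g_inj) -big_split /=.
by rewrite big1 // => v _; rewrite fgN addNr.
Qed.

Lemma sum_block_mx (R : finNzRingType) (V : nmodType) n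
    (P : pred 'M[R]_(1 + n)) (f : 'M[R]_(1 + n) -> V) :
  \sum_(g | P g) f g = \sum_(x : R) \sum_(u : 'rV[R]_n) \sum_(v : 'cV[R]_n)
    \sum_(h : 'M[R]_n | P (block_mx x%:M u v h)) f (block_mx x%:M u v h).
Proof.
pose bl (p : R * ('rV[R]_n * ('cV[R]_n * 'M[R]_n))) := block_mx p.1%:M p.2.1 p.2.2.1 p.2.2.2.
have bl_bij : bijective bl.
  exists (fun g => (ulsubmx g 0 0, (ursubmx g, (dlsubmx g, drsubmx g)))).
    move=> [x [u [v h]]]; rewrite /bl /= block_mxKul block_mxKur block_mxKdl.
    by rewrite block_mxKdr mxE eqxx.
  by move=> g; rewrite /bl /= -mx11_scalar submxK.
rewrite big_mkcond (reindex bl) /=; last exact: onW_bij.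
symmetry; under eq_bigr do under eq_bigr do under eq_bigr do rewrite big_mkcond.
under eq_bigr do under eq_bigr do rewrite pair_bigA.
by under eq_bigr do rewrite pair_bigA; rewrite pair_bigA.
Qed.

Lemma exists_mxtrace_mulmx (F : fieldType) n (u : 'rV[F]_n) (s : F) :
  u != 0 -> exists w : 'cV[F]_n, \tr (w *m u) = s.
Proof.
move=> u_neq0; have [j uj_neq0] : exists j, u 0 j != 0.
  apply/existsP; apply: contraR u_neq0; rewrite negb_exists => /forallP u0.
  by apply/eqP/matrixP => i j; rewrite (ord1 i) mxE; apply/eqP; rewrite -[_ == _]negbK u0.
exists ((s / u 0 j) *: delta_mx j 0).
by rewrite mxtrace_mulC -scalemxAr mxtraceZ -colE trace_mx11 mxE divfK.
Qed.

Definition ffun_cons (T : Type) m (x : T) (f : {ffun 'I_m -> T}) : {ffun 'I_m.+1 -> T} :=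
  [ffun i => if unlift ord0 i is Some j then f j else x].

Lemma ffun_cons0 (T : Type) m (x : T) (f : {ffun 'I_m -> T}) : ffun_cons x f ord0 = x.
Proof. by rewrite ffunE unlift_none. Qed.

Lemma ffun_consS (T : Type) m (x : T) (f : {ffun 'I_m -> T}) j :
  ffun_cons x f (lift ord0 j) = f j.
Proof. by rewrite ffunE liftK. Qed.

Lemma sum_ffunS (T : finType) (V : nmodType) m (G : {ffun 'I_m.+1 -> T} -> V) :
  \sum_f G f = \sum_(x : T) \sum_(f : {ffun 'I_m -> T}) G (ffun_cons x f).
Proof.
rewrite pair_bigA /= (reindex (fun p : T * {ffun 'I_m -> T} => ffun_cons p.1 p.2)) //=.
exists (fun f : {ffun 'I_m.+1 -> T} => (f ord0, [ffun j => f (lift ord0 j)])).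
  move=> [x f] _ /=; rewrite ffun_cons0; congr (_, _); apply/ffunP => j.
  by rewrite ffunE ffun_consS.
move=> f _; apply/ffunP => i; rewrite ffunE.
by case: unliftP => [j ->|->]; rewrite ?ffunE.
Qed.

Section SpecialLinear.
Variable F : finFieldType.

Lemma card_det_fibre n (d : F) : d != 0 ->
  #|[set g : 'M[F]_n.+1 | \det g == d]| = #|[set g : 'M[F]_n.+1 | \det g == 1]|.
Proof.
move=> d_neq0.
pose D : 'M[F]_n.+1 := diag_mx (\row_i (if i == ord0 then d else 1)).
have detD : \det D = d.
  by rewrite det_diag big_ord_recl mxE eqxx big1 ?mulr1 // => i _; rewrite mxE.
have D_unit : D \in unitmx by rewrite unitmxE detD unitfE.
rewrite -!sum1_card (reindex_inj (can_inj (mulKmx D_unit))) /=.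
apply: eq_bigl => g; rewrite !inE det_mulmx detD.
by rewrite -{2}[d]mulr1 (inj_eq (mulfI d_neq0)).
Qed.

Lemma card_SL n : (0 < n)%N ->
  #|[set g : 'M[F]_n | \det g == 1]|%:Z =
    #|F|%:Z ^+ 'C(n, 2) * \prod_(2 <= j < n.+1) (#|F|%:Z ^+ j - 1).
Proof.
case: n => // n _; set SL := [set g : 'M[F]_n.+1 | \det g == 1].
have card_GL_SL : #|('GL_n.+1[F])%g| = (#|SL| * (#|F| - 1))%N.
  have -> : #|('GL_n.+1[F])%g| = #|[set g : 'M[F]_n.+1 | \det g != 0]|.
    by rewrite cardsT /= card_sub; apply: eq_card => A; rewrite !inE unitmxE unitfE.
  rewrite -sum1_card (partition_big (fun g : 'M[F]_n.+1 => \det g) (fun d => d != 0)) /=;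
    last by move=> g; rewrite inE.
  rewrite (eq_bigr (fun _ => #|SL|)) => [|d d_neq0]; last first.
    rewrite -(card_det_fibre n d_neq0) -sum1_card; apply: eq_bigl => g.
    by rewrite !inE; case: (eqVneq (\det g) d) => [->|]; rewrite ?d_neq0 ?andbF.
  rewrite big_const iter_addn_0 subn1 -(cardC1 (0 : F)).
  by rewrite mulnC; congr (_ * _)%N; apply: eq_card => x; rewrite !inE.
move: card_GL_SL; rewrite card_GL // big_ltn ?ltnS // expn1 mulnCA mulnC => /eqP.
rewrite eqn_pmul2r ?subn_gt0 ?card_finNzRing_gt1 // => /eqP <-.
rewrite -natz natrM natrX natr_prod natz; congr (_ * _); apply: eq_bigr => j _.
by rewrite natrB ?expn_gt0 ?(ltnW (card_finNzRing_gt1 F)) // natrX natz.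
Qed.

End SpecialLinear.

Section CharacterSums.
Variables (F : finFieldType) (r : nat).
Hypothesis r_gt0 : (0 < r)%N.
Hypothesis cardF : #|F| = (2 ^ r)%N.
Local Notation tr := (abs_tr r).
Local Notation psi := (lam r).

Lemma char2F : 2%N \in [pchar F].
Proof. exact: card_finPcharP cardF _. Qed.

Lemma exprD_exp2 i (x y : F) : (x + y) ^+ (2 ^ i) = x ^+ (2 ^ i) + y ^+ (2 ^ i).
Proof. by apply: exprDn_pchar; rewrite pnatX pnatE // char2F. Qed.

Lemma abs_trD (x y : F) : tr (x + y) = tr x + tr y.
Proof. by rewrite /abs_tr -big_split; apply: eq_bigr => i _; rewrite exprD_exp2. Qed.

Lemma abs_tr_sqr (x : F) : tr (x ^+ 2) = tr x.
Proof.
rewrite /abs_tr; case: r r_gt0 cardF => // r' _ cardF'.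
under eq_bigr do rewrite -exprM -expnS.
rewrite big_ord_recr /= -cardF' expf_card [RHS]big_ord_recl /= expn0 expr1 addrC.
by congr (_ + _); apply: eq_bigr => i _.
Qed.

Lemma sqr_abs_tr (x : F) : tr x ^+ 2 = tr x.
Proof.
rewrite -[RHS]abs_tr_sqr /abs_tr -(pFrobenius_autE char2F) rmorph_sum.
by apply: eq_bigr => i _; rewrite -[LHS]/(x ^+ (2 ^ i) ^+ 2) -!exprM mulnC.
Qed.

Lemma abs_tr_eq01 (x : F) : tr x = 0 \/ tr x = 1.
Proof.
have : tr x * (tr x - 1) == 0 by rewrite mulrBr mulr1 -expr2 sqr_abs_tr subrr.
by rewrite mulf_eq0 subr_eq0 => /orP[] /eqP; [left|right].
Qed.

Lemma exists_abs_tr_neq0 : exists x : F, tr x != 0.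
Proof.
(* tr is a polynomial map of degree 2^(r-1) < q, so it cannot vanish on all of F. *)
pose p : {poly F} := \sum_(i < r) 'X^(2 ^ i).
have p1 : p`_1 = 1.
  rewrite coef_sum (bigD1 (Ordinal r_gt0)) //= coefXn big1 ?addr0 // => i i_neq0.
  rewrite coefXn -[1%N](expn0 2) eqn_exp2l //.
  by move: i_neq0; rewrite -val_eqE /= eq_sym => /negPf ->.
have p_neq0 : p != 0.
  by apply/eqP => p0; move: p1; rewrite p0 coef0 => /eqP; rewrite eq_sym oner_eq0.
have size_p : (size p <= #|F|)%N.
  apply: (@leq_trans (2 ^ r.-1).+1); last first.
    by rewrite cardF -(prednK r_gt0) expnS mul2n -addnn -addn1 leq_add2l expn_gt0.
  apply: (big_ind (fun p : {poly F} => size p <= (2 ^ r.-1).+1)%N).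
  - by rewrite size_poly0.
  - by move=> q1 q2 ? ?; apply: leq_trans (size_polyD _ _) _; rewrite geq_max; apply/andP.
  by move=> i _; rewrite size_polyXn ltnS leq_exp2l // -ltnS prednK.
apply/existsP; apply: contraT; rewrite negb_exists => /forallP /= tr_eq0.
have all_roots : all (root p) (enum F).
  apply/allP => x _; rewrite /root horner_sum.
  under eq_bigr do rewrite hornerXn.
  by have := tr_eq0 x; rewrite negbK.
by have := max_poly_roots p_neq0 all_roots (enum_uniq F); rewrite -cardE ltnNge size_p.
Qed.

Lemma lamD (x y : F) : psi (x + y) = psi x * psi y.
Proof.
rewrite /lam abs_trD; case: (abs_tr_eq01 x) => ->; case: (abs_tr_eq01 y) => ->;
  rewrite ?addr0 ?add0r ?eqxx ?oner_eq0 ?mulr1 ?mul1r //.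
by rewrite (addrr_pchar2 char2F) eqxx mulrNN mulr1.
Qed.

Lemma lam0 : psi (0 : F) = 1.
Proof. by rewrite /lam /abs_tr big1 ?eqxx // => i _; rewrite expr0n expn_eq0. Qed.

Lemma lamN (x : F) : psi (- x) = psi x.
Proof. by rewrite (oppr_pchar2 char2F). Qed.

Lemma lam_exp2 s (x : F) : psi (x ^+ (2 ^ s)) = psi x.
Proof.
elim: s => [|s IH]; first by rewrite expr1.
by rewrite expnSr exprM /lam abs_tr_sqr -/(lam r _) IH.
Qed.

Lemma exists_lam_eqN1 : exists t : F, psi t = -1.
Proof. by have [t tr_t] := exists_abs_tr_neq0; exists t; rewrite /lam (negbTE tr_t). Qed.

Lemma sum_lam_affine (c d : F) : c != 0 -> \sum_x psi (c * x + d) = 0.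
Proof.
move=> c_neq0; have [t psi_t] := exists_lam_eqN1.
apply: (sum_eq0_sign_flip (g := fun x => x + t / c)); first exact: addIr.
by move=> x; rewrite mulrDr mulrCA divff // mulr1 addrAC lamD psi_t mulrN1.
Qed.

Lemma sum_lam_mul (z : F) : \sum_a psi (a * z) = if z == 0 then #|F|%:R else 0.
Proof.
case: eqP => [->|/eqP z_neq0].
  by under eq_bigr do rewrite mulr0 lam0; rewrite sumr_const.
by have := sum_lam_affine 0 z_neq0; under eq_bigr do rewrite addr0 mulrC.
Qed.

Lemma sum_lam_mul_nonzero (z : F) :
  \sum_(a | a != 0) psi (a * z) = if z == 0 then #|F|%:R - 1 else -1.
Proof.
have := sum_lam_mul z; rewrite (bigD1 0) //= mul0r lam0 => /(canRL (addKr 1)) ->.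
by case: eqP; rewrite ?addr0 // addrC.
Qed.

Lemma sum_lam_mxtrace_outer n (c : F) : c != 0 ->
  \sum_(u : 'rV[F]_n) \sum_(v : 'cV[F]_n) psi (c * \tr (v *m u)) = (#|F| ^ n)%:R.
Proof.
move=> c_neq0; rewrite (bigD1 0) //= [X in _ + X]big1 ?addr0 => [|u u_neq0].
  under eq_bigr do rewrite mulmx0 mxtrace0 mulr0 lam0.
  by rewrite sumr_const card_mx muln1.
have [t psi_t] := exists_lam_eqN1.
have [w tr_wu] := exists_mxtrace_mulmx (t / c) u_neq0.
apply: (sum_eq0_sign_flip (g := fun v => v + w)); first exact: addIr.
move=> v; rewrite mulmxDl mxtraceD tr_wu mulrDr mulrCA divff // mulr1.
by rewrite lamD psi_t mulrN1.
Qed.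

Definition trace_sum n (d a : F) : int :=
  \sum_(g : 'M[F]_n | \det g == d) psi (a * \tr g).

Lemma trace_sum_block_corner0 n (u : 'rV[F]_n) (v : 'cV[F]_n) (d a : F) :
  d != 0 -> a != 0 ->
  \sum_(h | \det (block_mx 0%:M u v h) == d) psi (a * \tr (block_mx 0%:M u v h)) = 0.
Proof.
move=> d_neq0 a_neq0; have [->|u_neq0] := eqVneq u 0.
  by rewrite big_pred0 // => h; rewrite det_lblock det_scalar1 mul0r eq_sym (negbTE d_neq0).
have [t psi_t] := exists_lam_eqN1.
have [w tr_wu] := exists_mxtrace_mulmx (t / a) u_neq0.
(* The shear h |-> h + w u keeps the determinant and flips the sign of every term. *)
have shear h : block_mx 0%:M u v (h + w *m u) = block_mx 1%:M 0 w 1%:M *m block_mx 0%:M u v h.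
  by rewrite mulmx_block ?mul1mx ?mul0mx ?mulmx0 mul_mx_scalar scale0r !addr0 add0r addrC.
rewrite big_mkcond; apply: (sum_eq0_sign_flip (g := fun h => h + w *m u)).
  exact: addIr.
move=> h /=; rewrite {1}shear det_mulmx det_lblock !det1 !mul1r.
case: ifP => _; last by rewrite oppr0.
rewrite !mxtrace_block mxtraceD tr_wu !mulrDr mulrCA divff // mulr1 addrA.
by rewrite lamD psi_t mulrN1.
Qed.

Lemma trace_sum_block_corner_unit n (u : 'rV[F]_n) (v : 'cV[F]_n) (x d a : F) :
  x != 0 ->
  \sum_(h | \det (block_mx x%:M u v h) == d) psi (a * \tr (block_mx x%:M u v h)) =
    psi (a * x) * trace_sum n (d / x) a * psi (a / x * \tr (v *m u)).
Proof.
move=> x_neq0; rewrite (reindex_inj (addIr (x^-1 *: (v *m u)))) /=.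
have schur h : block_mx x%:M u v (h + x^-1 *: (v *m u)) =
    block_mx 1%:M 0 (x^-1 *: v) 1%:M *m block_mx x%:M u 0 h.
  rewrite mulmx_block ?mul1mx ?mul0mx ?mulmx0 mul_mx_scalar ?addr0 ?add0r.
  by rewrite scalerA divff // scale1r -scalemxAl addrC.
rewrite /trace_sum big_distrr big_distrl /=; apply: eq_big => h.
  rewrite schur det_mulmx det_lblock det_ublock !det1 !mul1r det_scalar1.
  by apply/eqP/eqP => [<-|->]; [rewrite mulrC mulKf | rewrite mulrC divfK].
move=> _; rewrite mxtrace_block mxtraceD mxtraceZ mxtrace_scalar /=.
by rewrite !mulrDr !lamD mulr1n -[a / x * _]mulrA mulrA.
Qed.

Lemma trace_sum_rec n (d a : F) : d != 0 -> a != 0 ->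
  trace_sum (1 + n) d a =
    (#|F| ^ n)%:R * \sum_(x | x != 0) psi (a * x) * trace_sum n (d / x) a.
Proof.
move=> d_neq0 a_neq0; rewrite {1}/trace_sum sum_block_mx (bigD1 0) //=.
rewrite big1 ?add0r => [|u _]; last first.
  by apply: big1 => v _; apply: trace_sum_block_corner0.
rewrite big_distrr /=; apply: eq_bigr => x x_neq0.
under eq_bigr do under eq_bigr do rewrite trace_sum_block_corner_unit //.
under eq_bigr do rewrite -big_distrr /=.
by rewrite -big_distrr /= sum_lam_mxtrace_outer ?mulf_neq0 ?invr_eq0 // mulrC.
Qed.

Lemma trace_sum0 (d a : F) : trace_sum 0 d a = (d == 1)%:R.
Proof.
rewrite /trace_sum big_mkcond (eq_bigr (fun _ => (d == 1)%:R)) => [|g _].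
  by rewrite sumr_const card_mx.
by rewrite det_mx00 eq_sym; case: eqP => // _; rewrite /mxtrace big_ord0 mulr0 lam0.
Qed.

(* H_m(d, a) of the proof sketch, unrolled one coordinate at a time;
   fibre_sum_ffun gives the closed form. *)
Fixpoint fibre_sum m (d a : F) : int :=
  if m is m'.+1 then \sum_(x | x != 0) psi (a * x) * fibre_sum m' (d / x) a
  else (d == 1)%:R.

Lemma trace_sum_fibre_sum n (d a : F) : d != 0 -> a != 0 ->
  trace_sum n d a = (#|F| ^ 'C(n, 2))%:R * fibre_sum n d a.
Proof.
elim: n d => [|n IH] d d_neq0 a_neq0; first by rewrite trace_sum0 bin0n expn0 mul1r.
rewrite trace_sum_rec //= !big_distrr /=; apply: eq_bigr => x x_neq0.
rewrite IH ?mulf_neq0 ?invr_eq0 // binS bin1 addnC expnD natrM.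
ring.
Qed.

Lemma fibre_sum_scale m (d a : F) : a != 0 -> fibre_sum m d a = fibre_sum m (d * a ^+ m) 1.
Proof.
move=> a_neq0; elim: m d => [|m IH] d /=; first by rewrite expr0 mulr1.
rewrite [RHS](reindex_inj (mulfI a_neq0)) /=.
apply: eq_big => [x|x x_neq0]; first by rewrite mulf_eq0 negb_or a_neq0.
rewrite mul1r IH exprS; congr (_ * fibre_sum _ _ _).
by field; rewrite a_neq0 x_neq0.
Qed.

Lemma exp2_inj s : injective (fun y : F => y ^+ (2 ^ s)).
Proof.
elim: s => [|s IH] y z /=; first by rewrite !expr1.
by rewrite expnSr !exprM => /(fmorph_inj (pFrobenius_aut char2F)) /IH.
Qed.

Lemma fibre_sum_sqr m (e : F) : fibre_sum m (e ^+ 2) 1 = fibre_sum m e 1.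
Proof.
elim: m e => [|m IH] e /=; first by rewrite sqrf_eq1 (oppr_pchar2 char2F) orbb.
rewrite (reindex_inj (exp2_inj (s := 1))) /=.
apply: eq_big => [x|x x_neq0]; first by rewrite expf_eq0.
by rewrite !mul1r lam_exp2 -expr_div_n IH.
Qed.

Lemma fibre_sum_exp2 s m (e : F) : fibre_sum m (e ^+ (2 ^ s)) 1 = fibre_sum m e 1.
Proof.
elim: s e => [|s IH] e; first by rewrite expr1.
by rewrite expnSr exprM fibre_sum_sqr IH.
Qed.

Lemma sum_fibre_sum m : \sum_(e : F | e != 0) fibre_sum m e 1 = (-1) ^+ m.
Proof.
elim: m => [|m IH] /=.
  by rewrite (bigD1 1) ?oner_neq0 //= eqxx big1 ?addr0 // => e /andP[_ /negbTE ->].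
have sum_psi : \sum_(x : F | x != 0) psi (1 * x) = -1.
  by under eq_bigr do rewrite mulrC; rewrite sum_lam_mul_nonzero oner_eq0.
rewrite exchange_big /= exprS -IH -sum_psi big_distrl /=; apply: eq_bigr => x x_neq0.
rewrite -big_distrr /= (reindex_inj (mulIf x_neq0)) /=; congr (_ * _).
apply: eq_big => [e|e e_neq0]; first by rewrite mulf_eq0 negb_or x_neq0 andbT.
by rewrite mulfK.
Qed.

Lemma sum_lam_fibre_sum m (c : F) : c != 0 ->
  \sum_(e | e != 0) psi (c * e) * fibre_sum m.+1 e 1 =
    #|F|%:R * fibre_sum m c^-1 1 - (-1) ^+ m.
Proof.
move=> c_neq0 /=.
have char_sum y : \sum_(x | x != 0) psi (x * (c * y + 1)) = (y == c^-1)%:R * #|F|%:R - 1.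
  have -> : (y == c^-1) = (c * y == 1) by rewrite -(inj_eq (mulfI c_neq0)) divff.
  rewrite sum_lam_mul_nonzero addr_eq0 (oppr_pchar2 char2F).
  by case: eqP; rewrite ?mul1r ?mul0r ?sub0r.
(* Substituting e = y x separates the variables; the sum over x is then complete. *)
under eq_bigr do rewrite big_distrr /=.
rewrite exchange_big /=.
under eq_bigr => x x_neq0.
  rewrite (reindex_inj (mulIf x_neq0)) /=.
  rewrite (eq_big (fun y => y != 0) (fun y => psi (x * (c * y + 1)) * fibre_sum m y 1)).
  - over.
  - by move=> y; rewrite mulf_eq0 negb_or x_neq0 andbT.
  move=> y _; rewrite mulfK // mul1r mulrA -lamD.
  by have -> : c * (y * x) + x = x * (c * y + 1) by ring.
rewrite exchange_big /=.
under eq_bigr do rewrite -big_distrl /= char_sum mulrBl mul1r -mulrA.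
rewrite sumrB sum_fibre_sum (bigD1 c^-1) ?invr_eq0 //= eqxx mul1r big1 ?addr0 //.
by move=> y /andP[_ /negbTE ->]; rewrite mul0r.
Qed.

Lemma sum_lam_fibre_sum_exp2 s (b : F) : (0 < s)%N ->
  \sum_(a | a != 0) psi (a * b) * fibre_sum (2 ^ s) 1 a =
    if b == 0 then 1 else #|F|%:R * fibre_sum (2 ^ s).-1 b^-1 1 + 1.
Proof.
move=> s_gt0.
have frobenius_subst : \sum_(a | a != 0) psi (a * b) * fibre_sum (2 ^ s) 1 a =
    \sum_(e | e != 0) psi (b ^+ (2 ^ s) * e) * fibre_sum (2 ^ s) e 1.
  rewrite [RHS](reindex_inj (exp2_inj (s := s))) /=.
  apply: eq_big => [a|a a_neq0]; first by rewrite expf_eq0 negb_and expn_gt0.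
  by rewrite (fibre_sum_scale _ _ a_neq0) mul1r -exprMn lam_exp2 (mulrC b).
have exp2_pred : (2 ^ s = (2 ^ s).-1.+1)%N by rewrite prednK // expn_gt0.
have odd_exp2 : odd (2 ^ s) = false by rewrite oddX eqn0Ngt s_gt0.
rewrite frobenius_subst; case: eqP => [->|/eqP b_neq0].
  under eq_bigr do rewrite expr0n expn_eq0 /= mul0r lam0 mul1r.
  by rewrite sum_fibre_sum -signr_odd odd_exp2.
rewrite [in LHS]exp2_pred sum_lam_fibre_sum ?expf_neq0 // -exprVn -exp2_pred.
rewrite fibre_sum_exp2 -signr_odd -[odd _]negbK -oddS -exp2_pred odd_exp2.
by rewrite expr1 opprK.
Qed.

Lemma fibre_sum_ffun m (d : F) : fibre_sum m d 1 =
  \sum_(al : {ffun 'I_m -> F} | [forall i, al i != 0] && (\prod_i al i == d))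
     psi (\sum_i al i).
Proof.
elim: m d => [|m IH] d /=.
  have all_neq0 (al : {ffun 'I_0 -> F}) : [forall i, al i != 0] by apply/forallP => -[].
  rewrite big_mkcond (eq_bigr (fun _ => (d == 1)%:R)) => [|al _].
    by rewrite sumr_const card_ffun card_ord expn0.
  by rewrite all_neq0 !big_ord0 lam0 eq_sym; case: (_ == _).
rewrite [RHS]big_mkcond sum_ffunS [LHS]big_mkcond; apply: eq_bigr => x _.
have [->|x_neq0] := eqVneq x 0.
  symmetry; apply: big1 => f _.
  suff /negbTE -> : ~~ [forall i, ffun_cons 0 f i != 0] by [].
  by apply/forallPn; exists ord0; rewrite ffun_cons0 eqxx.
rewrite /= IH mul1r big_distrr big_mkcond /=; apply: eq_bigr => f _.
have -> : [forall i, ffun_cons x f i != 0] = [forall j, f j != 0].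
  apply/forallP/forallP => [f_neq0 j|f_neq0 i].
    by have := f_neq0 (lift ord0 j); rewrite ffun_consS.
  by rewrite ffunE; case: (unliftP ord0 i).
rewrite !big_ord_recl ffun_cons0 !(eq_bigr _ (fun i _ => ffun_consS x f i)).
have -> : (x * \prod_i f i == d) = (\prod_i f i == d / x).
  by apply/eqP/eqP => [<-|->]; [rewrite mulrC mulKf | rewrite mulrC divfK].
by case: ifP => _; rewrite ?andbF ?mulr0 // lamD.
Qed.

Lemma fibre_sum_kloosterman m (e : F) : e != 0 -> fibre_sum m.+1 e 1 = kloosterman r m e.
Proof.
move=> e_neq0; case: m => [|m].
  rewrite /= (bigD1 e) //= divff // eqxx mulr1 mul1r big1 ?addr0 // => x /andP[x_neq0 x_neq_e].
  by rewrite -(inj_eq (mulIf x_neq0)) divfK // mul1r eq_sym (negbTE x_neq_e) mulr0.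
have -> : fibre_sum m.+2 e 1 = \sum_(x | x != 0) psi (1 * x) * fibre_sum m.+1 (e / x) 1 by [].
rewrite /kloosterman.
under eq_bigr do rewrite fibre_sum_ffun big_distrr /= big_mkcond /=.
rewrite exchange_big /= [RHS]big_mkcond; apply: eq_bigr => al _.
case: ifP => al_neq0 /=; last by apply: big1.
have P_neq0 : \prod_i al i != 0 by apply/prodf_neq0 => i _; move/forallP: al_neq0.
set P := \prod_(i < m.+1) al i in P_neq0 *.
rewrite (bigD1 (e / P)) ?mulf_neq0 ?invr_eq0 //= invf_div mulrCA divff // mulr1.
rewrite eqxx mul1r lamD mulrC [X in _ + X = _]big1 ?addr0 // => x /andP[x_neq0 x_neq].
case: eqP => [P_eq|_] //; move: x_neq.
by rewrite P_eq invf_div mulrCA divff // mulr1 eqxx.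
Qed.

Lemma n_beta_mul_card n (b : F) :
  (n_beta n b)%:Z * #|F|%:Z =
    #|[set g : 'M[F]_n | \det g == 1]|%:Z + \sum_(a | a != 0) psi (a * b) * trace_sum n 1 a.
Proof.
rewrite -[X in _ * X = _]natz.
have detector (t : F) : (t == b)%:R * #|F|%:R = \sum_a psi (a * (t - b)) :> int.
  by rewrite sum_lam_mul subr_eq0; case: eqP; rewrite ?mul1r ?mul0r.
have -> : (n_beta n b)%:Z = \sum_(g : 'M[F]_n | \det g == 1) (\tr g == b)%:R.
  rewrite /n_beta -sum1_card -[LHS]natz natr_sum big_mkcond [RHS]big_mkcond /=.
  by apply: eq_bigr => g _; rewrite inE; case: (\det g == 1); case: (\tr g == b).
rewrite big_distrl /=; under eq_bigr do rewrite detector.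
rewrite exchange_big /= (bigD1 0) //=; congr (_ + _).
  under eq_bigr do rewrite mul0r lam0.
  by rewrite sumr_const -natz; congr (_%:R); apply: eq_card => g; rewrite inE.
apply: eq_bigr => a _; rewrite /trace_sum big_distrr /=; apply: eq_bigr => g _.
by rewrite mulrBr -mulrN lamD mulrN lamN mulrC.
Qed.
End CharacterSums.

Theorem corollary12 (F : finFieldType) (s r : nat) (n q : nat)
  (hs : (0 < s)%N) (hr : (0 < r)%N)
  (hn : n = (2 ^ s)%N) (hq : q = (2 ^ r)%N) (hF : #|F| = q)
  (b : F) :
  (n_beta n b)%:Z =
    (q%:Z) ^+ ('C(n, 2) - 1) *
    ((\prod_(2 <= j < n.+1) ((q%:Z) ^+ j - 1)) + 1 + q%:Z * theta r n b).
Proof.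
have cardF : #|F| = (2 ^ r)%N by rewrite hF hq.
have n_gt1 : (1 < n)%N by rewrite hn -{1}(expn0 2) ltn_exp2l.
have q_neq0 : q%:Z != 0 by rewrite hq -natz pnatr_eq0 expn_eq0.
have character_sum : \sum_(a | a != 0) lam r (a * b) * trace_sum r n 1 a =
    q%:Z ^+ 'C(n, 2) * (1 + q%:Z * theta r n b).
  under eq_bigr do rewrite trace_sum_fibre_sum ?oner_neq0 // mulrCA.
  rewrite -big_distrr /= hn sum_lam_fibre_sum_exp2 // -hn /theta -natz natrX -hF.
  case: eqP => [_|/eqP b_neq0]; first by rewrite mulr0 addr0.
  have -> : n.-1 = (n - 2).+1 by rewrite -subSn // subSS subn1.
  by rewrite fibre_sum_kloosterman ?invr_eq0 // addrC.
apply: (mulIf q_neq0).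
rewrite -{1}hF (n_beta_mul_card hr cardF) character_sum card_SL ?(ltnW n_gt1) // hF.
by rewrite mulrAC -exprSr subn1 prednK ?bin_gt0 // -mulrDr addrA.
Qed.
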